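(* Let $G$ be a connected graph with globally bounded vertex degree, i.e. there is $A<\infty$ with $\deg(v)\le A$ for every vertex $v$ of $G$. Then its clique graph $\mathcal{C}(G)$ also has globally bounded vertex degree, and $\mathcal{C}(G)$ is roughly isometric to $G$ with constants $C=\epsilon=1$. That is, there is a map $f$ from the vertex set of $G$ to the vertex set of $\mathcal{C}(G)$ such that $$d_G(v,v')-1\le d_{\mathcal{C}(G)}(f(v),f(v'))\le d_G(v,v')+1$$ for all vertices $v,v'$ of $G$, and every vertex of $\mathcal{C}(G)$ lies within $d_{\mathcal{C}(G)}$-distance $1$ of some point of $f(G)$.
   Context: A graph is regarded as a metric space on its vertex set via the graph metric: $d_G(v,v')$ is the minimal number of edges in a path joining $v$ and $v'$. A clique of $G$ is a maximal complete subgraph, i.e. a maximal set of vertices that are pairwise joined by edges. The clique graph $\mathcal{C}(G)$ has the cliques of $G$ as its vertices. Two cliques are joined by an edge in $\mathcal{C}(G)$ iff they share at least one vertex of $G$. $\mathcal{C}(G)$ carries its own graph metric $d_{\mathcal{C}(G)}$. A map $f:X\to Y$ between metric spaces is an $\epsilon$-rough isometry (with $C=\epsilon$) if $|d_Y(f(x),f(x'))-d_X(x,x')|\le\epsilon$ for all $x,x'\in X$ and every $y\in Y$ satisfies $d_Y(y,f(x))\le C$ for some $x\in X$. *)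

From Stdlib Require Import List.
Set Implicit Arguments.

Section Graphs.
Variables (V : Type) (adj : V -> V -> Prop).

Definition simple_graph : Prop :=
  (forall u v, adj u v -> adj v u) /\ (forall v, ~ adj v v).

Inductive walk : nat -> V -> V -> Prop :=
| walk0 v : walk 0 v v
| walkS n u v w : adj u v -> walk n v w -> walk (S n) u w.

Definition connected : Prop := forall u v, exists n, walk n u v.

Definition is_dist (u v : V) (n : nat) : Prop :=
  walk n u v /\ forall m, walk m u v -> n <= m.

Definition bounded_degree : Prop :=
  exists A : nat, forall (v : V) (l : list V),
    NoDup l -> (forall w, In w l -> adj v w) -> length l <= A.

Definition complete (K : V -> Prop) : Prop :=
  forall x y, K x -> K y -> x <> y -> adj x y.

Definition is_clique (K : V -> Prop) : Prop :=
  complete K /\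
  forall K' : V -> Prop, complete K' -> (forall x, K x -> K' x) -> forall x, K' x -> K x.

Definition clique : Type := { K : V -> Prop | is_clique K }.

Definition clique_adj (K K' : clique) : Prop :=
  K <> K' /\ exists v, proj1_sig K v /\ proj1_sig K' v.

End Graphs.

(* Every vertex lies in a clique and every edge in a clique: with degrees at
   most A a complete set has at most A + 1 vertices, so any complete set can be
   greedily enlarged to a maximal one. Sending v to a clique containing it, a
   walk v_0 ... v_n in G yields the clique walk f(v_0), K_1, ..., K_n, f(v_n)
   with K_i containing the edge v_(i-1) v_i, of length at most n + 1; a clique
   walk K_0 ... K_m from f(v) to f(v') yields a vertex walk through the shared
   vertices of consecutive cliques, of length at most m + 1. Every clique
   contains some x and so meets f(x). The neighbours of a clique K are cliques
   inside the closed neighbourhood N of K, which has at most (A + 1)^2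
   vertices, and a clique inside N is determined by its trace on N, so K has
   at most 2^((A+1)^2) neighbours. *)
From Stdlib Require Import Arith List Lia Classical ClassicalEpsilon
  FunctionalExtensionality PropExtensionality ProofIrrelevance.
Import ListNotations.

Lemma walk_is_dist {V : Type} {R : V -> V -> Prop} {n u v} :
  walk R n u v -> exists m, is_dist R u v m.
Proof.
  intros Hw.
  destruct (dec_inh_nat_subset_has_unique_least_element (fun m => walk R m u v))
    as [m [[Hm Hmin] _]].
  - intros m; apply classic.
  - exists n; exact Hw.
  - exists m; split; assumption.
Qed.

Lemma maximal_extension {X : Type} (Good : list X -> Prop) N :
  (forall l, Good l -> length l <= N) ->
  forall l, Good l -> exists l', Good l' /\ incl l l' /\ forall y, ~ Good (y :: l').
Proof.
  intros Hbound.
  enough (H : forall k l, Good l -> N <= length l + k ->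
            exists l', Good l' /\ incl l l' /\ forall y, ~ Good (y :: l'))
    by (intros l Hl; apply (H N); [exact Hl | lia]).
  induction k as [|k IH]; intros l Hl Hlen;
    (destruct (classic (exists y, Good (y :: l))) as [[y Hy] | Hmax];
     [| exists l; split; [exact Hl | split; [apply incl_refl | eauto]]]).
  - pose proof (Hbound _ Hy); simpl in *; lia.
  - destruct (IH (y :: l) Hy) as (l' & Hl' & Hincl & Hmax); [simpl; lia |].
    exists l'; split; [exact Hl' | split; [| exact Hmax]].
    intros z Hz; apply Hincl; simpl; auto.
Qed.

Lemma enum_of_bounded {V : Type} (P : V -> Prop) N :
  (forall l, NoDup l -> (forall y, In y l -> P y) -> length l <= N) ->
  exists l, NoDup l /\ forall y, P y <-> In y l.
Proof.
  intros Hbound.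
  destruct (maximal_extension (fun l => NoDup l /\ forall y, In y l -> P y) N)
    with (l := @nil V) as (l & [Hnd HP] & _ & Hmax).
  - intros l [Hnd HP]; auto.
  - split; [constructor | intros y []].
  - exists l; split; [exact Hnd |]. intros y; split; [| auto].
    intros Py; apply NNPP; intros Hy; apply (Hmax y).
    split; [constructor; auto | intros z [<- | Hz]; auto].
Qed.

Fixpoint bitstrings (n : nat) : list (list bool) :=
  match n with
  | 0 => [[]]
  | S n => map (cons true) (bitstrings n) ++ map (cons false) (bitstrings n)
  end.

Lemma length_bitstrings n : length (bitstrings n) = 2 ^ n.
Proof. induction n; simpl; auto. rewrite length_app, !length_map, IHn; lia. Qed.

Lemma in_bitstrings (s : list bool) : In s (bitstrings (length s)).
Proof.
  induction s as [|b s IH]; simpl; auto.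
  apply in_or_app; destruct b; [left | right]; apply in_map; auto.
Qed.

Lemma NoDup_bitstrings_length_le (ls : list (list bool)) k :
  NoDup ls -> (forall s, In s ls -> length s = k) -> length ls <= 2 ^ k.
Proof.
  intros Hnd Hlen. rewrite <- length_bitstrings.
  apply NoDup_incl_length; [exact Hnd |].
  intros s Hs; rewrite <- (Hlen s Hs); apply in_bitstrings.
Qed.

Section CliqueGraph.
Context {V : Type} {adj : V -> V -> Prop}.

Lemma clique_ext (K K' : clique adj) :
  (forall y, proj1_sig K y <-> proj1_sig K' y) -> K = K'.
Proof.
  destruct K as [P HP], K' as [P' HP']; simpl; intros Heq.
  assert (P = P') as <- by (extensionality y; apply propositional_extensionality; auto).
  f_equal; apply proof_irrelevance.
Qed.

(* A clique with no vertex would be properly contained in any singleton. *)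
Lemma clique_inhabited (K : clique adj) : inhabited V -> exists x, proj1_sig K x.
Proof.
  intros [x0].
  destruct (classic (exists x, proj1_sig K x)) as [Hex | Hempty]; [exact Hex |].
  exists x0. apply (proj2 (proj2_sig K) (fun y => y = x0)); auto.
  - intros a b -> -> Hab; congruence.
  - intros y Hy; exfalso; eauto.
Qed.

Lemma clique_dist_le_1 {K K' : clique adj} {x} :
  proj1_sig K x -> proj1_sig K' x -> exists m, is_dist (@clique_adj _ adj) K K' m /\ m <= 1.
Proof.
  intros Hx Hx'. destruct (classic (K = K')) as [<- | Hne].
  - exists 0; split; [split; [constructor | lia] | lia].
  - exists 1; split; [| lia]. split.
    + econstructor; [split; eauto | constructor].
    + intros m Hm; inversion Hm; subst; [contradiction | lia].
Qed.

Lemma clique_walk_to_walk {m} {K K' : clique adj} :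
  walk (@clique_adj _ adj) m K K' -> forall x y, proj1_sig K x -> proj1_sig K' y ->
  exists j, j <= S m /\ walk adj j x y.
Proof.
  induction 1 as [K | m K K1 K' [_ (z & Hz & Hz1)] _ IH]; intros x y Hx Hy.
  - destruct (classic (x = y)) as [<- | Hxy].
    + exists 0; split; [lia | constructor].
    + exists 1; split; [lia |].
      apply walkS with y; [apply (proj1 (proj2_sig K)); auto | constructor].
  - destruct (IH z y Hz1 Hy) as (j & Hj & Hw).
    destruct (classic (x = z)) as [<- | Hxz].
    + exists j; split; [lia | exact Hw].
    + exists (S j); split; [lia |].
      apply walkS with z; [apply (proj1 (proj2_sig K)); auto | exact Hw].
Qed.

Hypothesis Hsimple : simple_graph adj.
Context {A : nat}.
Hypothesis Hdeg : forall (v : V) (l : list V),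
  NoDup l -> (forall w, In w l -> adj v w) -> length l <= A.

Lemma complete_length_le (l : list V) :
  NoDup l -> complete adj (fun y => In y l) -> length l <= S A.
Proof.
  destruct l as [|x l]; intros Hnd Hc; simpl; [lia |].
  inversion Hnd as [| ? ? Hx Hnd']; subst.
  apply le_n_S, (Hdeg x); [exact Hnd' |].
  intros w Hw; apply Hc; simpl; auto. intros ->; contradiction.
Qed.

Lemma complete_in_clique (l : list V) :
  NoDup l -> complete adj (fun y => In y l) ->
  exists K : clique adj, forall y, In y l -> proj1_sig K y.
Proof.
  intros Hnd Hc.
  destruct (maximal_extension (fun l => NoDup l /\ complete adj (fun y => In y l)) (S A))
    with (l := l) as (l' & [Hnd' Hc'] & Hincl & Hmax).
  - intros l0 [Hnd0 Hc0]; apply complete_length_le; auto.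
  - split; auto.
  - assert (Hcl : is_clique adj (fun y => In y l')).
    { split; [exact Hc' |]. intros K' HK' Hsub x Hx.
      apply NNPP; intros Hnx; apply (Hmax x). split; [constructor; auto |].
      intros a b [<- | Ha] [<- | Hb] Hab; try congruence; auto. }
    exists (exist _ _ Hcl); exact Hincl.
Qed.

Lemma clique_of_vertex x : exists K : clique adj, proj1_sig K x.
Proof.
  destruct (complete_in_clique [x]) as [K HK].
  - repeat constructor; intros [].
  - intros a b [<- | []] [<- | []]; congruence.
  - exists K; apply HK; simpl; auto.
Qed.

Lemma clique_of_edge x z : adj x z -> exists K : clique adj, proj1_sig K x /\ proj1_sig K z.
Proof.
  intros Hxz. assert (x <> z) by (intros ->; exact (proj2 Hsimple z Hxz)).
  destruct (complete_in_clique [x; z]) as [K HK].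
  - repeat constructor; simpl; intuition.
  - intros a b [<- | [<- | []]] [<- | [<- | []]] Hab; try congruence; auto.
    apply (proj1 Hsimple); exact Hxz.
  - exists K; split; apply HK; simpl; auto.
Qed.

Lemma walk_to_clique_walk {n x y} :
  walk adj n x y -> forall K K' : clique adj, proj1_sig K x -> proj1_sig K' y ->
  exists j, j <= S n /\ walk (@clique_adj _ adj) j K K'.
Proof.
  induction 1 as [x | n x z y Hxz _ IH]; intros K K' Hx Hy.
  - destruct (classic (K = K')) as [<- | HKK'].
    + exists 0; split; [lia | constructor].
    + exists 1; split; [lia |]. econstructor; [split; eauto | constructor].
  - destruct (clique_of_edge x z Hxz) as (K1 & Hx1 & Hz1).
    destruct (IH K1 K' Hz1 Hy) as (j & Hj & Hw).
    destruct (classic (K = K1)) as [<- | HKK1].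
    + exists j; split; [lia | exact Hw].
    + exists (S j); split; [lia |]. econstructor; [split; eauto | exact Hw].
Qed.

Lemma clique_graph_connected :
  inhabited V -> connected adj -> connected (@clique_adj _ adj).
Proof.
  intros Hne Hconn K K'.
  destruct (clique_inhabited K Hne) as [x Hx], (clique_inhabited K' Hne) as [y Hy].
  destruct (Hconn x y) as [n Hw].
  destruct (walk_to_clique_walk Hw K K' Hx Hy) as (j & _ & Hj).
  exists j; exact Hj.
Qed.

Lemma clique_dist_close {K K' : clique adj} {v v' n m} :
  proj1_sig K v -> proj1_sig K' v' ->
  is_dist adj v v' n -> is_dist (@clique_adj _ adj) K K' m -> n <= m + 1 /\ m <= n + 1.
Proof.
  intros Hv Hv' [Hn Hnmin] [Hm Hmmin]. split.
  - destruct (clique_walk_to_walk Hm v v' Hv Hv') as (k & Hk & Hw).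
    specialize (Hnmin k Hw); lia.
  - destruct (walk_to_clique_walk Hn K K' Hv Hv') as (k & Hk & Hw).
    specialize (Hmmin k Hw); lia.
Qed.

Lemma clique_enum (K : clique adj) :
  exists kl, (forall y, proj1_sig K y <-> In y kl) /\ length kl <= S A.
Proof.
  assert (Hbound : forall l, NoDup l -> (forall y, In y l -> proj1_sig K y) -> length l <= S A).
  { intros l Hnd HK; apply complete_length_le; [exact Hnd |].
    intros a b Ha Hb; apply (proj1 (proj2_sig K)); auto. }
  destruct (enum_of_bounded _ _ Hbound) as (kl & Hnd & Hkl).
  exists kl; split; [exact Hkl |].
  apply Hbound; [exact Hnd | intros y; apply Hkl].
Qed.

Lemma closed_neighbourhood_cover (kl : list V) : exists L,
  (forall z y, In z kl -> z = y \/ adj z y -> In y L) /\ length L <= length kl * S A.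
Proof.
  induction kl as [|z kl IH].
  - exists []; split; [intros ? ? [] | simpl; lia].
  - destruct IH as (L & HL & HLlen).
    destruct (enum_of_bounded (adj z) A) as (nz & Hnd & Hnz); [apply Hdeg |].
    assert (length nz <= A) by (apply (Hdeg z); [exact Hnd | intros w; apply Hnz]).
    exists (z :: nz ++ L); split.
    + intros a y [<- | Ha] [<- | Hy]; simpl; rewrite ?in_app_iff, <- ?Hnz; eauto.
    + simpl; rewrite length_app; lia.
Qed.

Definition indicator (L : list V) (K : clique adj) : list bool :=
  map (fun y => if excluded_middle_informative (proj1_sig K y) then true else false) L.

Lemma indicator_inj (L : list V) (K K' : clique adj) :
  (forall y, proj1_sig K y -> In y L) -> (forall y, proj1_sig K' y -> In y L) ->
  indicator L K = indicator L K' -> K = K'.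
Proof.
  intros HK HK' Heq. unfold indicator in Heq; rewrite map_ext_in_iff in Heq.
  apply clique_ext; intros y; split; intros Hy;
    [specialize (Heq y (HK y Hy)) | specialize (Heq y (HK' y Hy))];
    do 2 destruct excluded_middle_informative; easy.
Qed.

Lemma clique_graph_bounded_degree : bounded_degree (@clique_adj _ adj).
Proof.
  exists (2 ^ (S A * S A)). intros K l Hnd Hadj.
  destruct (clique_enum K) as (kl & Hkl & Hkllen).
  destruct (closed_neighbourhood_cover kl) as (L & HL & HLlen).
  assert (Hsub : forall K', In K' l -> forall y, proj1_sig K' y -> In y L).
  { intros K' HK' y Hy. destruct (Hadj K' HK') as [_ (z & Hz & Hz')].
    apply (HL z); [apply Hkl; exact Hz |].
    destruct (classic (z = y)); [left; assumption |].
    right; apply (proj1 (proj2_sig K')); auto. }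
  assert (Hcodes : NoDup (map (indicator L) l)).
  { apply NoDup_map_NoDup_ForallPairs; [| exact Hnd].
    intros K1 K2 H1 H2; apply indicator_inj; [apply Hsub, H1 | apply Hsub, H2]. }
  transitivity (2 ^ length L).
  - rewrite <- (length_map (indicator L) l).
    apply NoDup_bitstrings_length_le; [exact Hcodes |].
    intros s Hs; apply in_map_iff in Hs as (K' & <- & _); apply length_map.
  - apply Nat.pow_le_mono_r; nia.
Qed.

Definition clique_at (x : V) : clique adj :=
  proj1_sig (constructive_indefinite_description _ (clique_of_vertex x)).

Lemma clique_at_spec x : proj1_sig (clique_at x) x.
Proof. exact (proj2_sig (constructive_indefinite_description _ (clique_of_vertex x))). Qed.

End CliqueGraph.

Theorem mainTheorem1 (V : Type) (adj : V -> V -> Prop)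
  (Hsimple : simple_graph adj) (Hne : inhabited V)
  (Hconn : connected adj) (Hbd : bounded_degree adj) :
  bounded_degree (@clique_adj V adj) /\
  exists f : V -> clique adj,
    (forall v v' : V, exists m,
        is_dist (@clique_adj V adj) (f v) (f v') m /\
        forall n, is_dist adj v v' n -> n <= m + 1 /\ m <= n + 1) /\
    (forall K : clique adj, exists v m,
        is_dist (@clique_adj V adj) K (f v) m /\ m <= 1).
Proof.
  destruct Hbd as [A Hdeg].
  split; [exact (clique_graph_bounded_degree Hdeg) |].
  set (f := clique_at Hdeg).
  exists f; split.
  - intros v v'.
    destruct (clique_graph_connected Hsimple Hdeg Hne Hconn (f v) (f v')) as [j Hj].
    destruct (walk_is_dist Hj) as [m Hm].
    exists m; split; [exact Hm |]. intros n Hn.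
    exact (clique_dist_close Hsimple Hdeg
             (clique_at_spec Hdeg v) (clique_at_spec Hdeg v') Hn Hm).
  - intros K. destruct (clique_inhabited K Hne) as [x Hx].
    exists x; exact (clique_dist_le_1 Hx (clique_at_spec Hdeg x)).
Qed.
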